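(* Let $(X,\rho,\mu)$ be a $K$-doubling metric measure space, let $x\in X$ with $\mu(\{x\})=0$, let $B$ be a $\mu$-neighborhood of $x$ and let $f\colon B\to[0,+\infty)$ be a Lipschitz function with $f(x)=0$. Then $$\limsup_{y\in B,\ y\to x}\frac{f(y)}{\rho(y,x)}=\mu\text{-}\limsup_{y\in B,\ y\to x}\frac{f(y)}{\rho(y,x)}.$$
   Context: A $K$-doubling metric measure space ($K>0$) is a triple $(X,\rho,\mu)$ where $(X,\rho)$ is a complete separable metric space and $\mu$ is a Borel-regular outer measure on $X$ with $0<\mu(B_{2r}(x))\le K\mu(B_r(x))<+\infty$ for all $x\in X$, $r>0$. A set $E\ni x$ is a $\mu$-neighborhood of $x$ if there is a Borel set $B\subseteq E$ with $\lim_{r\to0^+}\mu(B_r(x)\setminus B)/\mu(B_r(x))=0$. For a real function $g$ on $A\subseteq X$ and a point $x$ such that $A\cap U\setminus\{x\}\neq\emptyset$ for every $\mu$-neighborhood $U$ of $x$, one sets $\mu\text{-}\limsup_{y\in A,\,y\to x}g(y)=\inf_U\sup_{y\in U\cap A\setminus\{x\}}g(y)$, the infimum over all $\mu$-neighborhoods $U$ of $x$. *)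

From HB Require Import structures.
From mathcomp Require Import all_boot all_order all_algebra.
From mathcomp Require Import all_classical all_reals all_analysis.
Set Implicit Arguments. Unset Strict Implicit. Unset Printing Implicit Defensive.
Import Order.TTheory GRing.Theory Num.Theory.
Import numFieldNormedType.Exports.
Local Open Scope classical_set_scope.
Local Open Scope ring_scope.

Section MMS.
Context {R : realType} {X : Type}.

Definition is_metric (rho : X -> X -> R) : Prop :=
  [/\ forall x y, 0 <= rho x y,
      forall x y, rho x y = 0 <-> x = y,
      forall x y, rho x y = rho y x &
      forall x y z, rho x z <= rho x y + rho y z].

Definition mball (rho : X -> X -> R) (x : X) (r : R) : set X :=
  [set y | rho x y < r].

Definition metric_complete (rho : X -> X -> R) : Prop :=
  forall u : nat -> X,
    (forall e : R, 0 < e -> exists N, forall m n, (N <= m)%N -> (N <= n)%N ->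
        rho (u m) (u n) < e) ->
    exists l, forall e : R, 0 < e -> exists N, forall n, (N <= n)%N -> rho (u n) l < e.

Definition metric_separable (rho : X -> X -> R) : Prop :=
  exists D : nat -> X, forall x (e : R), 0 < e -> exists n, rho x (D n) < e.

Definition metric_open (rho : X -> X -> R) (A : set X) : Prop :=
  forall x, A x -> exists r : R, 0 < r /\ mball rho x r `<=` A.

Definition borel_set (rho : X -> X -> R) : set (set X) :=
  smallest (sigma_algebra setT) (metric_open rho).

Definition borel_regular (rho : X -> X -> R) (mu : set X -> \bar R) : Prop :=
  (forall A, borel_set rho A -> caratheodory_measurable mu A) /\
  (forall A, exists B, [/\ borel_set rho B, A `<=` B & mu B = mu A]).

Definition doubling_mms (K : R) (rho : X -> X -> R)
    (mu : {outer_measure set X -> \bar R}) : Prop :=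
  [/\ 0 < K, is_metric rho, metric_complete rho /\ metric_separable rho,
      borel_regular rho mu &
      forall x (r : R), 0 < r ->
        [/\ (0 < mu (mball rho x (2 * r)))%E,
            (mu (mball rho x (2 * r)) <= K%:E * mu (mball rho x r))%E &
            (K%:E * mu (mball rho x r) < +oo)%E]].

Definition mu_nbhd (rho : X -> X -> R) (mu : set X -> \bar R) (x : X) (E : set X)
  : Prop :=
  E x /\ exists B, [/\ borel_set rho B, B `<=` E &
    (fun r : R => fine (mu (mball rho x r `\` B)) / fine (mu (mball rho x r)))
      @ 0^'+ --> 0].

Definition metric_limsup (rho : X -> X -> R) (A : set X) (g : X -> R) (x : X)
  : \bar R :=
  ereal_inf [set ereal_sup [set (g y)%:E | y in (A `&` mball rho x r) `\ x]
            | r in [set r : R | 0 < r]].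

Definition mu_limsup (rho : X -> X -> R) (mu : set X -> \bar R) (A : set X)
    (g : X -> R) (x : X) : \bar R :=
  ereal_inf [set ereal_sup [set (g y)%:E | y in (U `&` A) `\ x]
            | U in mu_nbhd rho mu x].

Definition mms_lipschitz_on (rho : X -> X -> R) (B : set X) (f : X -> R) : Prop :=
  exists L : R, forall y z, B y -> B z -> `|f y - f z| <= L * rho y z.

End MMS.

(** Every ball around [x] is a μ-neighbourhood of [x], so the μ-limsup is at
    most the metric limsup. Conversely, a μ-neighbourhood [U] of [x] and [B]
    both contain Borel sets of density one at [x], hence so does [U ∩ B].  A
    set [E] of density one at [x] meets every ball [B(y, δ ρ(y,x))] with [y]
    close to [x]: by doubling, that ball carries a fixed fraction of the
    measure of [B(x, 2ρ(y,x))], while the complement of [E] carries a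
    vanishing fraction.  For such a point [z ∈ E] the Lipschitz bound gives
    [f(y)/ρ(y,x) <= f(z)/ρ(z,x) + O(δ)], so the metric limsup is bounded by
    the supremum over [U ∩ B].

    Since [z] is found at distance about [ρ(y,x)] from [x], the argument never
    uses [μ {x} = 0], [f >= 0] or [f x = 0]. *)

From HB Require Import structures.
From mathcomp Require Import all_boot all_order all_algebra.
From mathcomp Require Import all_classical all_reals all_analysis.
From mathcomp Require Import lra.
Import Order.TTheory GRing.Theory Num.Theory.
Import numFieldNormedType.Exports.
Local Open Scope classical_set_scope.
Local Open Scope ring_scope.

Lemma lee_gtEFin (R : realType) (u v : \bar R) :
  (forall c : R, (v < c%:E)%E -> (u <= c%:E)%E) -> (u <= v)%E.
Proof.
case: v => [r||] uc.
- apply/lee_addgt0Pr => e e0; apply: uc.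
  by rewrite lte_fin ltrDl.
- by rewrite leey.
- case: u uc => [a||] uc //.
  + by exfalso; have := uc (a - 1)%R (ltNyr _); rewrite lee_fin; lra.
  + by have := uc 0%R (ltNyr _).
Qed.

Section DoublingSpace.
Context {R : realType} {X : Type} {K : R} {rho : X -> X -> R}
  {mu : {outer_measure set X -> \bar R}}.
Hypothesis doubling : doubling_mms K rho mu.

Lemma rho_ge0 y z : 0 <= rho y z. Proof. by case: doubling => _ []. Qed.
Lemma rho_eq0 y z : rho y z = 0 <-> y = z. Proof. by case: doubling => _ []. Qed.
Lemma rhoC y z : rho y z = rho z y. Proof. by case: doubling => _ []. Qed.
Lemma rho_triangle y w z : rho y z <= rho y w + rho w z.
Proof. by case: doubling => _ []. Qed.
Lemma K_gt0 : 0 < K. Proof. by case: doubling. Qed.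

Lemma rho_gt0 {y z : X} : y <> z -> 0 < rho y z.
Proof. by move=> yz; rewrite lt_def rho_ge0 andbT; apply/eqP => /rho_eq0. Qed.

Lemma mball_open z r : metric_open rho (mball rho z r).
Proof.
move=> w; rewrite /mball /= => zw; exists (r - rho z w).
split; first by rewrite subr_gt0.
by move=> v; rewrite /mball /= => wv; have := rho_triangle z w v; lra.
Qed.

Lemma mball_borel z r : borel_set rho (mball rho z r).
Proof. by move=> S [_ openS]; exact/openS/mball_open. Qed.

Lemma mu_mball_fin_num (z : X) {r : R} :
  0 < r -> mu (mball rho z r) \is a fin_num.
Proof.
move=> r0; case: doubling => _ _ _ _ /(_ z r r0) [_ _].
rewrite ge0_fin_numE ?outer_measure_ge0 // => Kmu_lt; rewrite ltey.
by apply: contraTN Kmu_lt => /eqP ->; rewrite gt0_muley ?lte_fin ?K_gt0.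
Qed.

Lemma mu_sub_mball_fin_num {V : set X} {z : X} {r : R} :
  0 < r -> V `<=` mball rho z r -> mu V \is a fin_num.
Proof.
move=> r0 Vz; rewrite ge0_fin_numE ?outer_measure_ge0 //.
apply: le_lt_trans (le_outer_measure mu _ _ Vz) _.
by rewrite -ge0_fin_numE ?outer_measure_ge0 ?mu_mball_fin_num.
Qed.

Lemma fine_mu_le {V W : set X} {z : X} {r : R} :
  0 < r -> W `<=` mball rho z r -> V `<=` W -> fine (mu V) <= fine (mu W).
Proof.
move=> r0 Wz VW; have Vz := subset_trans VW Wz.
by apply: fine_le; [exact: (mu_sub_mball_fin_num r0 Vz)|
  exact: (mu_sub_mball_fin_num r0 Wz)| exact: le_outer_measure].
Qed.

Lemma fine_mu_mball_gt0 (z : X) {r : R} :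
  0 < r -> 0 < fine (mu (mball rho z r)).
Proof.
move=> r0; have r20 : 0 < r / 2 by rewrite divr_gt0.
case: doubling => _ _ _ _ /(_ z (r / 2) r20) [+ _ _].
rewrite mulrC divfK ?pnatr_eq0 // => mu_gt0.
by rewrite fine_gt0 // mu_gt0 -ge0_fin_numE ?outer_measure_ge0 ?mu_mball_fin_num.
Qed.

Lemma doubling_expn n (z : X) {r : R} : 0 < r ->
  fine (mu (mball rho z (2 ^+ n * r))) <= K ^+ n * fine (mu (mball rho z r)).
Proof.
move=> r0; elim: n => [|n IH]; first by rewrite !expr0 !mul1r.
have rn0 : 0 < 2 ^+ n * r by rewrite mulr_gt0 // exprn_gt0.
case: doubling => _ _ _ _ /(_ z _ rn0) [_ mu_double _].
have r2n0 : 0 < 2 * (2 ^+ n * r) by rewrite mulr_gt0.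
have fin_rn := mu_mball_fin_num z rn0.
have := fine_le (mu_mball_fin_num z r2n0) _ mu_double.
rewrite fin_numM // fineM // => /(_ isT) le_double.
rewrite exprS -mulrA (le_trans le_double) // exprS -mulrA.
by rewrite ler_wpM2l // (ltW K_gt0).
Qed.

Definition compl_ratio (x : X) (E : set X) (r : R) : R :=
  fine (mu (mball rho x r `\` E)) / fine (mu (mball rho x r)).

Definition density_point (x : X) (E : set X) : Prop :=
  compl_ratio x E @ 0^'+ --> 0.

Lemma mball_density_point x r : 0 < r -> density_point x (mball rho x r).
Proof.
move=> r0; apply/cvgrPdist_lt => e e0; near=> t.
have tr : t < r by near: t; exact: nbhs_right_lt.
rewrite /compl_ratio; have -> : mball rho x t `\` mball rho x r = set0.
  by apply/seteqP; split => // w [/= wt]; apply; exact: lt_trans tr.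
by rewrite outer_measure0 /= mul0r subr0 normr0.
Unshelve. all: by end_near.
Qed.

Lemma density_pointI {x : X} {E1 E2 : set X} :
  density_point x E1 -> density_point x E2 -> density_point x (E1 `&` E2).
Proof.
move=> E1x E2x; have E12x : compl_ratio x E1 \+ compl_ratio x E2 @ 0^'+ --> 0.
  by rewrite -[X in _ --> X]addr0; exact: cvgD.
apply: (squeeze_cvgr _ (cvg_cst 0) E12x); near=> t.
have t0 : 0 < t by near: t; exact: nbhs_right_gt.
set T := mball rho x t; have T0 := fine_mu_mball_gt0 x t0.
have diff_fin E : mu (T `\` E) \is a fin_num.
  exact: mu_sub_mball_fin_num t0 (@subDsetl _ _ _).
rewrite /compl_ratio /= -mulrDl; apply/andP; split.
  by rewrite divr_ge0 ?fine_ge0 ?outer_measure_ge0 // (ltW T0).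
rewrite ler_pM2r ?invr_gt0 // -fineD //.
apply: fine_le; rewrite ?fin_numD ?diff_fin //.
apply: le_trans (outer_measureU2 _ _ _); apply: le_outer_measure.
by move=> w [Tw /not_andP [E1w|E2w]]; [left|right].
Unshelve. all: by end_near.
Qed.

Lemma density_point_meets_mball {x : X} {E : set X} {delta : R} :
  density_point x E -> 0 < delta <= 1 ->
  exists2 r0, 0 < r0 & forall y, 0 < rho y x < r0 ->
    exists2 z, E z & rho y z < delta * rho y x.
Proof.
move=> Ex /andP[delta0 delta1].
pose n := Num.bound (4 / delta).
have n_large : 4 <= 2 ^+ n * delta.
  have /ltW := archi_boundP (divr_ge0 (ler0n _ 4) (ltW delta0)).
  rewrite ler_pdivrMr // => /le_trans; apply; rewrite ler_pM2r //.
  rewrite (_ : 2 ^+ n = (2 ^ n)%:R); last by rewrite natrX.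
  by rewrite ler_nat ltnW // ltn_expl.
have Kn0 : 0 < K ^+ n by rewrite exprn_gt0 // K_gt0.
have iKn0 : 0 < (K ^+ n)^-1 by rewrite invr_gt0.
have /cvgrPdist_lt /(_ _ iKn0) [r1 /= r10 small] := Ex.
exists (r1 / 2); first by rewrite divr_gt0.
move=> y /andP[s0 sr1]; set s := rho y x in s0 sr1 *.
have s20 : 0 < 2 * s by rewrite mulr_gt0.
set T := mball rho x (2 * s); set Y := mball rho y (delta * s).
have : `|0 - compl_ratio x E (2 * s)| < (K ^+ n)^-1.
  by apply: small => //; rewrite /ball /= sub0r normrN gtr0_norm //; lra.
rewrite sub0r normrN => /(le_lt_trans (ler_norm _)).
rewrite /compl_ratio ltr_pdivrMr ?fine_mu_mball_gt0 // => E_sparse.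
apply: contrapT => E_missing.
have YT : Y `<=` T.
  move=> w; rewrite /Y /T /mball /= => yw.
  by have := rho_triangle x y w; rewrite (rhoC x y) -/s; nra.
have TYn : T `<=` mball rho y (2 ^+ n * (delta * s)).
  move=> w; rewrite /T /mball /= => xw.
  by have := rho_triangle y x w; rewrite -/s; nra.
have ds0 : 0 < delta * s by rewrite mulr_gt0.
have Yn0 : 0 < 2 ^+ n * (delta * s) by rewrite mulr_gt0 ?exprn_gt0.
have Y_sparse : Y `<=` T `\` E.
  by move=> w Yw; split; [exact: YT | move=> Ew; apply: E_missing; exists w].
have mu_T : fine (mu T) <= K ^+ n * fine (mu (T `\` E)).
  apply: le_trans (fine_mu_le Yn0 (@subset_refl _ _) TYn) _.
  apply: le_trans (doubling_expn n y ds0) _.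
  rewrite ler_wpM2l ?(ltW Kn0) //.
  exact: fine_mu_le s20 (@subDsetl _ _ _) Y_sparse.
by move: E_sparse; rewrite ltr_pdivlMl //; lra.
Qed.

Lemma mball_mu_nbhd x r : 0 < r -> mu_nbhd rho mu x (mball rho x r).
Proof.
move=> r0; split; first by rewrite /mball /= (proj2 (rho_eq0 x x) erefl).
exists (mball rho x r); split => //; first exact: mball_borel.
exact: mball_density_point.
Qed.

Lemma mu_limsup_le_metric_limsup A g x :
  (mu_limsup rho mu A g x <= metric_limsup rho A g x)%E.
Proof.
apply/ereal_infP => _ [r r0 <-]; apply: ereal_inf_lbound.
by exists (mball rho x r); [exact: mball_mu_nbhd | rewrite setIC].
Qed.

Lemma metric_limsup_ratio_le x A f E c :
  mms_lipschitz_on rho A f -> density_point x E -> E `<=` A ->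
  (forall z, E z -> z <> x -> f z / rho z x <= c) ->
  (metric_limsup rho A (fun y => (f y / rho y x)%R) x <= c%:E)%E.
Proof.
move=> [L lipf] Ex EA Ec; apply/lee_addgt0Pr => e e0.
pose M := `|c| + `|L|; have M0 : 0 <= M by rewrite addr_ge0.
pose delta := Order.min 1 (e / (M + 1)).
have delta0 : 0 < delta by rewrite lt_min ltr01 divr_gt0 //; lra.
have Mdelta : M * delta <= e.
  have : delta <= e / (M + 1) by rewrite ge_min lexx orbT.
  move=> /(ler_wpM2l M0) /le_trans; apply.
  rewrite mulrA ler_pdivrMr; nra.
have delta01 : 0 < delta <= 1 by rewrite delta0 ge_min lexx.
have [r0 r00 near_E] := density_point_meets_mball Ex delta01.
apply: ge_ereal_inf.
exists (ereal_sup [set (f y / rho y x)%R%:E | y in (A `&` mball rho x r0) `\ x]).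
  by exists r0.
apply: ge_ereal_sup => _ [y [[Ay xy] yx] <-]; rewrite -EFinD lee_fin.
set s := rho y x; have s0 : 0 < s := rho_gt0 yx.
have [z Ez yz] : exists2 z, E z & rho y z < delta * s.
  by apply: near_E; rewrite s0 /= /s rhoC.
have zx : z <> x by move=> zx; move: yz; rewrite zx -/s; nra.
have := Ec z Ez zx; rewrite ler_pdivrMr ?rho_gt0 // => fz.
have := lipf y z Ay (EA z Ez) => /(le_trans (ler_norm _)) lip.
have := rho_triangle z y x; have := rho_triangle y z x.
rewrite (rhoC z y) -/s => tri1 tri2.
have c_shift : c * rho z x <= c * s + `|c| * rho y z.
  rewrite -lerBlDl -mulrBr (le_trans (ler_norm _)) // normrM ler_wpM2l //.
  by rewrite ler_norml; apply/andP; split; lra.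
have L_abs : L * rho y z <= `|L| * rho y z.
  by rewrite ler_wpM2r ?rho_ge0 ?ler_norm.
have M_yz : M * rho y z <= e * s.
  apply: le_trans (ler_wpM2l M0 (ltW yz)) _.
  by rewrite mulrA ler_wpM2r // ltW.
rewrite ler_pdivrMr // /M in M_yz *; nra.
Qed.

Lemma metric_limsup_le_mu_limsup {x : X} {A : set X} {f : X -> R} :
  mu_nbhd rho mu x A -> mms_lipschitz_on rho A f ->
  (metric_limsup rho A (fun y => (f y / rho y x)%R) x <=
   mu_limsup rho mu A (fun y => (f y / rho y x)%R) x)%E.
Proof.
move=> [_ [Ac [_ AcA Acx]]] lipf.
apply/ereal_infP => _ [U [_ [Uc [_ UcU Ucx]]] <-].
apply: lee_gtEFin => c sup_lt_c.
apply: metric_limsup_ratio_le lipf (density_pointI Ucx Acx) _ _.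
  by move=> z [_ /AcA].
move=> z [/UcU Uz /AcA Az] zx; rewrite -lee_fin.
by apply/ltW/(le_lt_trans _ sup_lt_c)/ereal_sup_ubound; exists z.
Qed.

End DoublingSpace.

Theorem proposition2p4 (R : realType) (X : Type) (K : R) (rho : X -> X -> R)
    (mu : {outer_measure set X -> \bar R}) (x : X) (B : set X) (f : X -> R) :
  doubling_mms K rho mu ->
  mu [set x] = 0%E ->
  mu_nbhd rho mu x B ->
  (forall y, B y -> 0 <= f y) ->
  mms_lipschitz_on rho B f ->
  f x = 0 ->
  metric_limsup rho B (fun y => f y / rho y x) x =
  mu_limsup rho mu B (fun y => f y / rho y x) x.
Proof.
move=> doubling _ Bx _ lipf _; apply/le_anti/andP; split.
- by have := metric_limsup_le_mu_limsup doubling Bx lipf.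
- by have := mu_limsup_le_metric_limsup doubling B (fun y => f y / rho y x) x.
Qed.
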